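(* For all integers $c\geq 1$, $$\sum_{n\geq 0}\bar a_c(2n)q^n=\frac{f_2^{c-1}f_4^5}{f_1^{2c+2}f_8^2},\qquad \sum_{n\geq 0}\bar a_c(2n+1)q^n=2\,\frac{f_8^2}{f_4}\left(\frac{f_2}{f_1^2}\right)^{c+1}.$$
   Context: For an integer $k\geq 1$ let $f_k:=\prod_{n\geq 1}(1-q^{kn})$. For an integer $c\geq1$, the generalized overcubic partition function $\bar a_c(n)$ is defined by the generating function $\sum_{n\geq 0}\bar a_c(n)q^n=\dfrac{f_4^{c-1}}{f_1^2f_2^{2c-3}}$. *)

From mathcomp Require Import all_boot all_order all_algebra.
Set Implicit Arguments. Unset Strict Implicit. Unset Printing Implicit Defensive.
Import Order.TTheory GRing.Theory Num.Theory.
Local Open Scope ring_scope.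

Definition fps := nat -> int.

Definition fps_mul (F G : fps) : fps :=
  fun n => \sum_(i < n.+1) F i * G (n - i)%N.

Definition fps_one : fps := fun n => if n == 0%N then 1 else 0.

Definition fps_scale (a : int) (F : fps) : fps := fun n => a * F n.

Fixpoint fps_exp (F : fps) (k : nat) : fps :=
  match k with 0 => fps_one | k.+1 => fps_mul F (fps_exp F k) end.

(* Multiplicative inverse of a power series with constant term 1:
   first n+1 coefficients, computed by the standard recurrence. *)
Fixpoint inv_seq (F : fps) (n : nat) : seq int :=
  match n with
  | 0 => [:: 1]
  | m.+1 => let s := inv_seq F m in
            rcons s (- \sum_(i < m.+1) F (m.+1 - i)%N * nth 0 s i)
  end.

Definition fps_inv (F : fps) : fps := fun n => nth 0 (inv_seq F n) n.

(* integer powers (negative powers via the inverse; used only for series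
   with constant term 1) *)
Definition fps_zpow (F : fps) (z : int) : fps :=
  match z with
  | Posz n => fps_exp F n
  | Negz n => fps_exp (fps_inv F) n.+1
  end.

(* f_k = prod_{j>=1} (1 - q^{kj}); for k >= 1 the coefficient of q^n only
   depends on the factors with j <= n. *)
Definition fk (k : nat) : fps :=
  fun n => (\prod_(1 <= j < n.+1) (1 - 'X^(k * j)) : {poly int})`_n.

Definition abar (c : nat) : fps :=
  fps_mul (fps_exp (fk 4) (c.-1))
    (fps_mul (fps_zpow (fk 1) (-2)) (fps_zpow (fk 2) (3%:Z - 2%:Z * c%:Z))).

(* The generating function of [abar c] is f_4^(c-1) f_2^(3-2c) / f_1^2, and every factor but
   1/f_1^2 is a series in q^2, so it suffices to 2-dissect 1/f_1^2.  Gauss's identities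
   phi(q) = f_2^5 / (f_1^2 f_4^2) and psi(q^2) = f_4^2 / f_2, both limits of a finite Jacobi
   triple product (itself an instance of the q-binomial theorem), turn the elementary
   dissection phi(q) = phi(q^4) + 2q psi(q^8) into
     1/f_1^2 = f_8^5 / (f_2^5 f_16^2) + 2q f_4^2 f_16^2 / (f_2^5 f_8).
   Identities between power series are proved on their truncations modulo q^(N+1). *)

From HB Require Import structures.
From mathcomp Require Import all_boot all_order all_algebra.
From mathcomp Require Import boolp zify ring.
Set Implicit Arguments. Unset Strict Implicit. Unset Printing Implicit Defensive.
Import Order.TTheory GRing.Theory Num.Theory.
Local Open Scope ring_scope.

Implicit Types (F G H : fps) (p r : {poly int}).

Lemma fps_ext F G : F =1 G -> F = G.
Proof. exact: functional_extensionality_dep. Qed.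

Definition fps_of_poly p : fps := fun n => p`_n.

Definition trunc N F : {poly int} := \poly_(i < N.+1) F i.

Definition eq_upto N F G := trunc N F = trunc N G.

Lemma eq_uptoP N F G : eq_upto N F G <-> forall i, (i <= N)%N -> F i = G i.
Proof.
split=> [eFG i le_iN | eFG].
  by have := congr1 (fun p => p`_i) eFG; rewrite !coef_poly ltnS le_iN.
by apply/polyP => i; rewrite !coef_poly; case: ifP => // /eFG.
Qed.

Lemma fps_eq_upto F G : (forall N, eq_upto N F G) -> F = G.
Proof. by move=> eFG; apply: fps_ext => n; have /eq_uptoP := eFG n; apply. Qed.

Lemma eq_upto_trunc N F : eq_upto N F (fps_of_poly (trunc N F)).
Proof. by apply/eq_uptoP => i le_iN; rewrite /fps_of_poly coef_poly ltnS le_iN. Qed.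

Lemma eq_upto_fps_mul N F F' G G' : eq_upto N F F' -> eq_upto N G G' ->
  eq_upto N (fps_mul F G) (fps_mul F' G').
Proof.
move=> /eq_uptoP eF /eq_uptoP eG; apply/eq_uptoP => i le_iN; apply: eq_bigr => j _.
have lt_ji := ltn_ord j; rewrite eF ?eG //; lia.
Qed.

Lemma fps_mul_poly p r : fps_mul (fps_of_poly p) (fps_of_poly r) = fps_of_poly (p * r).
Proof. by apply: fps_ext => n; rewrite /fps_of_poly coefM. Qed.

HB.instance Definition _ := gen_eqMixin fps.
HB.instance Definition _ := gen_choiceMixin fps.

Definition fps_zero : fps := fun=> 0.
Definition fps_add F G : fps := fun n => F n + G n.
Definition fps_opp F : fps := fun n => - F n.

Lemma fps_addA : associative fps_add.
Proof. by move=> F G H; apply: fps_ext => n; apply: addrA. Qed.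
Lemma fps_addC : commutative fps_add.
Proof. by move=> F G; apply: fps_ext => n; apply: addrC. Qed.
Lemma fps_add0 : left_id fps_zero fps_add.
Proof. by move=> F; apply: fps_ext => n; apply: add0r. Qed.
Lemma fps_addN : left_inverse fps_zero fps_opp fps_add.
Proof. by move=> F; apply: fps_ext => n; apply: addNr. Qed.

HB.instance Definition _ := GRing.isZmodule.Build fps fps_addA fps_addC fps_add0 fps_addN.

Lemma fps_addE F G n : (F + G) n = F n + G n. Proof. by []. Qed.

Lemma fps_mulA : associative fps_mul.
Proof.
move=> F G H; apply: fps_eq_upto => N; have t := @eq_upto_trunc N.
rewrite /eq_upto (eq_upto_fps_mul (t F) (eq_upto_fps_mul (t G) (t H))) !fps_mul_poly mulrA.
by rewrite -!fps_mul_poly -(eq_upto_fps_mul (eq_upto_fps_mul (t F) (t G)) (t H)).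
Qed.

Lemma fps_mulC : commutative fps_mul.
Proof.
move=> F G; apply: fps_eq_upto => N; have t := @eq_upto_trunc N.
rewrite /eq_upto (eq_upto_fps_mul (t F) (t G)) fps_mul_poly mulrC -fps_mul_poly.
by rewrite -(eq_upto_fps_mul (t G) (t F)).
Qed.

Lemma fps_oneE : fps_one = fps_of_poly 1.
Proof. by apply: fps_ext => n; rewrite /fps_of_poly /fps_one coef1; case: (n == 0%N). Qed.

Lemma fps_of_polyD p r : fps_of_poly (p + r) = fps_add (fps_of_poly p) (fps_of_poly r).
Proof. by apply: fps_ext => n; rewrite /fps_of_poly coefD. Qed.

Lemma eq_upto_fps_add N F F' G G' : eq_upto N F F' -> eq_upto N G G' ->
  eq_upto N (fps_add F G) (fps_add F' G').
Proof.
move=> /eq_uptoP eF /eq_uptoP eG.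
by apply/eq_uptoP => i le_iN; rewrite /fps_add eF ?eG.
Qed.

Lemma fps_mul1 : left_id fps_one fps_mul.
Proof.
move=> F; apply: fps_eq_upto => N; have t := @eq_upto_trunc N F.
by rewrite /eq_upto fps_oneE (eq_upto_fps_mul (erefl _) t) fps_mul_poly mul1r -t.
Qed.

Lemma fps_mulDl : left_distributive fps_mul fps_add.
Proof.
move=> F G H; apply: fps_eq_upto => N; have t := @eq_upto_trunc N.
rewrite /eq_upto (eq_upto_fps_mul (eq_upto_fps_add (t F) (t G)) (t H)).
rewrite -fps_of_polyD fps_mul_poly mulrDl fps_of_polyD -!fps_mul_poly.
by rewrite -(eq_upto_fps_add (eq_upto_fps_mul (t F) (t H)) (eq_upto_fps_mul (t G) (t H))).
Qed.

Lemma fps_one_neq0 : fps_one != 0.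
Proof. by apply/eqP => /(congr1 (fun F : fps => F 0%N)). Qed.

HB.instance Definition _ :=
  GRing.Zmodule_isComNzRing.Build fps fps_mulA fps_mulC fps_mul1 fps_mulDl fps_one_neq0.

Lemma fps_mulE F G : fps_mul F G = F * G. Proof. by []. Qed.

Lemma coef_fps_mul F G n : (F * G) n = \sum_(i < n.+1) F i * G (n - i)%N.
Proof. by []. Qed.

Lemma fps_expE F k : fps_exp F k = F ^+ k.
Proof. by elim: k => [|k IHk] //=; rewrite IHk exprS. Qed.

Lemma fps_scale_nat n F : fps_scale n%:R F = n%:R * F.
Proof.
apply: fps_ext => i; rewrite /fps_scale !mulr_natl.
by elim: n => [|n IHn]; rewrite ?mulr0n // !mulrS fps_addE IHn.
Qed.

Lemma fps_of_poly_is_nmod_morphism : nmod_morphism fps_of_poly.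
Proof.
by split=> [|p r]; [apply: fps_ext => n; rewrite /fps_of_poly coef0 | exact: fps_of_polyD].
Qed.

HB.instance Definition _ :=
  GRing.isNmodMorphism.Build {poly int} fps fps_of_poly fps_of_poly_is_nmod_morphism.

Lemma fps_of_poly_is_monoid_morphism : monoid_morphism fps_of_poly.
Proof. by split=> [|p r]; rewrite -?fps_oneE -?fps_mul_poly. Qed.

HB.instance Definition _ :=
  GRing.isMonoidMorphism.Build {poly int} fps fps_of_poly fps_of_poly_is_monoid_morphism.

Notation fps_X := (fps_of_poly 'X).

Lemma eq_uptoM N F F' G G' :
  eq_upto N F F' -> eq_upto N G G' -> eq_upto N (F * G) (F' * G').
Proof. exact: eq_upto_fps_mul. Qed.

Lemma eq_uptoD N F F' G G' :
  eq_upto N F F' -> eq_upto N G G' -> eq_upto N (F + G) (F' + G').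
Proof. exact: eq_upto_fps_add. Qed.

Lemma eq_uptoX N F G k : eq_upto N F G -> eq_upto N (F ^+ k) (G ^+ k).
Proof. by move=> eFG; elim: k => [|k IHk] //; rewrite !exprS; apply: eq_uptoM. Qed.

Lemma eq_upto_sum N (I : Type) (s : seq I) (P : pred I) (F G : I -> fps) :
  (forall i, P i -> eq_upto N (F i) (G i)) ->
  eq_upto N (\sum_(i <- s | P i) F i) (\sum_(i <- s | P i) G i).
Proof. by move=> eFG; apply: (big_ind2 (eq_upto N)) => //; apply: eq_uptoD. Qed.

Lemma eq_upto_cancel N F F' G G' : G * G' = 1 ->
  eq_upto N (F * G) (F' * G) -> eq_upto N F F'.
Proof.
move=> GG' eFF'; rewrite -[F]mulr1 -[F']mulr1 -GG' !mulrA.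
exact: eq_uptoM eFF' (erefl _).
Qed.

Lemma coef_fps_of_polyM p F n : (fps_of_poly p * F) n = (p * trunc n F)`_n.
Proof.
have /eq_uptoP/(_ n (leqnn n)) -> :=
  eq_uptoM (erefl (trunc n (fps_of_poly p))) (@eq_upto_trunc n F).
by rewrite -rmorphM.
Qed.

Lemma coef_fps_XM F n : (fps_X * F) n = if n is m.+1 then F m else 0.
Proof.
by rewrite coef_fps_of_polyM coefXM; case: n => // n; rewrite coef_poly leqnSn.
Qed.

Lemma eq_upto_XnM N s F : (N < s)%N -> eq_upto N (fps_of_poly 'X^s * F) 0.
Proof.
move=> lt_Ns; apply/eq_uptoP => i le_iN.
by rewrite coef_fps_of_polyM coefXnM ifT //; lia.
Qed.

Lemma size_inv_seq F n : size (inv_seq F n) = n.+1.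
Proof. by elim: n => [|n IHn] //=; rewrite size_rcons IHn. Qed.

Lemma nth_inv_seq F m i : (i <= m)%N -> nth 0 (inv_seq F m) i = fps_inv F i.
Proof.
elim: m => [|m IHm] le_im; first by move: le_im; rewrite leqn0 => /eqP ->.
have [lt_im|->] : (i < m.+1)%N \/ i = m.+1 by lia.
  by rewrite /= nth_rcons size_inv_seq lt_im IHm.
by [].
Qed.

Lemma fps_invS F m :
  fps_inv F m.+1 = - \sum_(i < m.+1) F (m.+1 - i)%N * fps_inv F i.
Proof.
rewrite {1}/fps_inv /= nth_rcons size_inv_seq ltnn eqxx; congr (- _).
by apply: eq_bigr => i _; rewrite nth_inv_seq // -ltnS.
Qed.

Lemma fps_mulV F : F 0%N = 1 -> F * fps_inv F = 1.
Proof.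
move=> F0; rewrite mulrC; apply: fps_ext => -[|m]; rewrite coef_fps_mul.
  by rewrite big_ord1 F0 mulr1.
rewrite big_ord_recr /= subnn F0 mulr1 fps_invS.
rewrite [X in X + _](_ : _ = \sum_(i < m.+1) F (m.+1 - i)%N * fps_inv F i) ?addrN //.
by apply: eq_bigr => i _; rewrite mulrC.
Qed.

Lemma mulr1_uniq (R : comPzRingType) (x y z : R) : x * y = 1 -> x * z = 1 -> y = z.
Proof. by move=> xy1 xz1; rewrite -[y]mul1r -xz1 mulrAC xy1 mul1r. Qed.

Lemma fps_zpowN F n : fps_zpow F (- n%:Z) = fps_inv F ^+ n.
Proof. by case: n => [|n]; [exact: (fps_expE F 0) | rewrite -NegzE; exact: fps_expE]. Qed.

Lemma fps_zpowB F a b : F 0%N = 1 ->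
  fps_zpow F (a%:Z - b%:Z) * fps_inv F ^+ a = fps_inv F ^+ b.
Proof.
move=> F0; have [le_ba|lt_ab] := leqP b a.
  rewrite subzn // /fps_zpow fps_expE -{2}(subnK le_ba) [fps_inv F ^+ _]exprD.
  by rewrite mulrA -exprMn fps_mulV // expr1n mul1r.
rewrite -[a%:Z - b%:Z]opprB subzn ?(ltnW lt_ab) // fps_zpowN -exprD.
by rewrite subnK // ltnW.
Qed.

(** * Dilation q -> q^k *)

Definition dilate (k : nat) F : fps := fun n => if (k %| n)%N then F (n %/ k)%N else 0.

Lemma eq_upto_dilate N k F G : eq_upto N F G -> eq_upto N (dilate k F) (dilate k G).
Proof.
move=> /eq_uptoP eFG; apply/eq_uptoP => i le_iN; rewrite /dilate; case: ifP => // _.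
by apply: eFG; apply: leq_trans (leq_div _ _) le_iN.
Qed.

Lemma dilate_poly k p : (0 < k)%N -> dilate k (fps_of_poly p) = fps_of_poly (p \Po 'X^k).
Proof. by move=> k_gt0; apply: fps_ext => n; rewrite /fps_of_poly coef_comp_poly_Xn. Qed.

Lemma dilate0 F : dilate 0 F = fps_of_poly (F 0%N)%:P.
Proof.
apply: fps_ext => n; rewrite /dilate /fps_of_poly coefC dvd0n.
by case: eqP => // ->.
Qed.

Lemma dilate_is_nmod_morphism k : nmod_morphism (dilate k).
Proof.
by split=> [|F G]; apply: fps_ext => n; rewrite /dilate ?fps_addE; case: ifP.
Qed.

HB.instance Definition _ k :=
  GRing.isNmodMorphism.Build fps fps (dilate k) (dilate_is_nmod_morphism k).

Lemma dilate_is_monoid_morphism k : monoid_morphism (dilate k).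
Proof.
have [->|k_gt0] := posnP k.
  split=> [|F G]; rewrite !dilate0; first by rewrite polyC1 rmorph1.
  by rewrite coef_fps_mul big_ord1 polyCM rmorphM.
split=> [|F G]; first by rewrite -(rmorph1 fps_of_poly) dilate_poly // -polyC1 comp_polyC.
apply: fps_eq_upto => N; have t := @eq_upto_trunc N.
rewrite /eq_upto (eq_upto_dilate k (eq_uptoM (t F) (t G))) -rmorphM /= dilate_poly //.
rewrite comp_polyM rmorphM /= -!dilate_poly //.
exact: eq_uptoM (eq_upto_dilate k (esym (t F))) (eq_upto_dilate k (esym (t G))).
Qed.

HB.instance Definition _ k :=
  GRing.isMonoidMorphism.Build fps fps (dilate k) (dilate_is_monoid_morphism k).

Lemma dilate2_even F n : dilate 2 F (2 * n)%N = F n.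
Proof. by rewrite /dilate dvdn_mulr // mulKn. Qed.

Lemma dilate2_odd F n : dilate 2 F (2 * n).+1 = 0.
Proof. by rewrite /dilate -[(2 * n).+1]addn1 dvdn_addr ?dvdn_mulr. Qed.

Lemma coef_dissect2 F G n :
  (dilate 2 F + fps_X * dilate 2 G) (2 * n)%N = F n /\
  (dilate 2 F + fps_X * dilate 2 G) (2 * n).+1 = G n.
Proof.
rewrite !fps_addE !coef_fps_XM dilate2_odd !dilate2_even add0r; split=> //.
by case: n => [|n]; rewrite ?addr0 // mulnS add2n dilate2_odd addr0.
Qed.

Notation fk_inv k := (fps_inv (fk k)).

Definition eta_poly (k m : nat) : {poly int} := \prod_(0 <= j < m) (1 - 'X^(k * j.+1)).

Lemma fkE k n : fk k n = (eta_poly k n)`_n.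
Proof. by rewrite /fk /eta_poly big_add1. Qed.

Lemma coef_mul_prod_one_subXn p (a : nat -> nat) m m' i :
  (forall j, (m <= j < m')%N -> (i < a j)%N) ->
  (p * \prod_(m <= j < m') (1 - 'X^(a j)))`_i = p`_i.
Proof.
move=> lt_ia.
have [r ->] : exists r, \prod_(m <= j < m') (1 - 'X^(a j)) = 1 + 'X^(i.+1) * r.
  rewrite big_seq; apply: (big_ind (fun q => exists r, q = 1 + 'X^(i.+1) * r)).
  - by exists 0; rewrite mulr0 addr0.
  - by move=> _ _ [r1 ->] [r2 ->]; exists (r1 + r2 + 'X^(i.+1) * r1 * r2); ring.
  - move=> j; rewrite mem_index_iota => /lt_ia lt_iaj; exists (- 'X^(a j - i.+1)).
    by rewrite mulrN -exprD subnKC.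
by rewrite mulrDr mulr1 coefD mulrCA coefXnM ltnSn addr0.
Qed.

Lemma coef_eta_poly k m m' i : (0 < k)%N -> (i <= m)%N -> (m <= m')%N ->
  (eta_poly k m')`_i = (eta_poly k m)`_i.
Proof.
move=> k_gt0 le_im le_mm'; rewrite /eta_poly (@big_cat_nat _ _ _ m 0 m') //.
apply: coef_mul_prod_one_subXn => j /andP[le_mj _].
have := leq_pmull j.+1 k_gt0; lia.
Qed.

Lemma fk_eq_upto k N m : (0 < k)%N -> (N <= m)%N ->
  eq_upto N (fk k) (fps_of_poly (eta_poly k m)).
Proof.
move=> k_gt0 le_Nm; apply/eq_uptoP => i le_iN.
by rewrite fkE /fps_of_poly (@coef_eta_poly k i m) // (leq_trans le_iN).
Qed.

Lemma fk0 k : fk k 0%N = 1.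
Proof. by rewrite fkE /eta_poly big_geq // coef1. Qed.

Lemma fk_mulV k : fk k * fk_inv k = 1.
Proof. exact/fps_mulV/fk0. Qed.

Lemma mulr_fk_invK k F : F * fk_inv k * fk k = F.
Proof. by rewrite -mulrA [fk_inv k * _]mulrC fk_mulV mulr1. Qed.

Lemma eta_poly_comp k m n : eta_poly k n \Po 'X^m = eta_poly (m * k) n.
Proof.
rewrite /eta_poly rmorph_prod; apply: eq_bigr => j _.
by rewrite rmorphB /= comp_polyC comp_Xn_poly -exprM mulnA.
Qed.

Lemma dilate_fk m k : (0 < m)%N -> (0 < k)%N -> dilate m (fk k) = fk (m * k).
Proof.
move=> m_gt0 k_gt0; apply: fps_eq_upto => N.
rewrite /eq_upto (eq_upto_dilate m (fk_eq_upto k_gt0 (leqnn N))) dilate_poly //.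
by rewrite eta_poly_comp -fk_eq_upto // muln_gt0 m_gt0.
Qed.

Lemma dilate_fk_inv m k : (0 < m)%N -> (0 < k)%N -> dilate m (fk_inv k) = fk_inv (m * k).
Proof.
move=> m_gt0 k_gt0; apply: (@mulr1_uniq _ (fk (m * k))); last exact: fk_mulV.
by rewrite -dilate_fk // -rmorphM fk_mulV rmorph1.
Qed.

(** * Gaussian binomial coefficients *)

Section QBinomial.
Variable R : comPzRingType.
Implicit Types (Q x y : R).

Fixpoint qbinom Q (n k : nat) : R :=
  match n, k with
  | _, 0 => 1
  | 0, _.+1 => 0
  | n'.+1, k'.+1 => qbinom Q n' k' + Q ^+ k'.+1 * qbinom Q n' k'.+1
  end.

Lemma qbinom0 Q n : qbinom Q n 0 = 1. Proof. by case: n. Qed.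

Lemma qbinom_small Q n k : (n < k)%N -> qbinom Q n k = 0.
Proof.
elim: n k => [|n IHn] [|k] //= lt_nk.
by rewrite !IHn ?mulr0 ?addr0 // ltnW.
Qed.

Definition qpoch Q (m : nat) : R := \prod_(j < m) (1 - Q ^+ j.+1).

Lemma qpochS Q m : qpoch Q m.+1 = qpoch Q m * (1 - Q ^+ m.+1).
Proof. by rewrite /qpoch big_ord_recr. Qed.

Lemma qbinom_qpoch Q n k : (k <= n)%N ->
  qbinom Q n k * qpoch Q k * qpoch Q (n - k) = qpoch Q n.
Proof.
elim: n k => [|n IHn] [|k] le_kn //.
- by rewrite /qpoch !big_ord0 !mulr1.
- by rewrite qbinom0 subn0 /qpoch big_ord0 !mul1r.
have term1 : qbinom Q n k * qpoch Q k.+1 * qpoch Q (n - k) = qpoch Q n * (1 - Q ^+ k.+1).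
  by rewrite qpochS -(IHn k) //; ring.
have term2 : Q ^+ k.+1 * qbinom Q n k.+1 * qpoch Q k.+1 * qpoch Q (n - k) =
             qpoch Q n * (Q ^+ k.+1 - Q ^+ n.+1).
  have [lt_kn|->] : (k < n)%N \/ k = n by lia.
    have [d [e_nk e_n]] : exists d, (n - k = d.+1)%N /\ (n.+1 = k.+1 + d.+1)%N.
      by exists (n - k.+1)%N; lia.
    rewrite e_nk e_n -(IHn k.+1) // (_ : (n - k.+1 = d)%N); last by lia.
    by rewrite !qpochS exprD; ring.
  by rewrite qbinom_small // subrr !(mulr0, mul0r).
by rewrite /= subSS [qpoch Q n.+1]qpochS !mulrDl term1 term2; ring.
Qed.

Theorem qbinomial Q x y N :
  \prod_(0 <= j < N) (x + y * Q ^+ j) =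
  \sum_(0 <= k < N.+1) Q ^+ 'C(k, 2) * qbinom Q N k * y ^+ k * x ^+ (N - k).
Proof.
elim: N y => [|N IHN] y; first by rewrite big_geq // big_nat1 !expr0 !mulr1.
rewrite big_nat_recl // expr0 mulr1.
under eq_bigr do rewrite exprS mulrA.
rewrite IHN mulrDl.
have Sy : y * \sum_(0 <= k < N.+1) Q ^+ 'C(k, 2) * qbinom Q N k * (y * Q) ^+ k * x ^+ (N - k) =
    \sum_(0 <= k < N.+1) Q ^+ 'C(k.+1, 2) * qbinom Q N k * y ^+ k.+1 * x ^+ (N.+1 - k.+1).
  rewrite mulr_sumr; apply: eq_bigr => k _.
  by rewrite binS bin1 exprD exprMn exprS subSS; ring.
have Sx : x * \sum_(0 <= k < N.+1) Q ^+ 'C(k, 2) * qbinom Q N k * (y * Q) ^+ k * x ^+ (N - k) =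
    \sum_(0 <= k < N.+2) Q ^+ 'C(k, 2) * (Q ^+ k * qbinom Q N k) * y ^+ k * x ^+ (N.+1 - k).
  rewrite [in RHS]big_nat_recr //= qbinom_small // !(mulr0, mul0r) addr0 mulr_sumr.
  apply: eq_big_nat => k /andP[_ lt_kN]; rewrite subSn // exprS exprMn; ring.
rewrite Sy Sx big_nat_recl // [in RHS]big_nat_recl //= !qbinom0.
under [in RHS]eq_bigr do rewrite mulrDr !mulrDl.
by rewrite big_split /=; ring.
Qed.

End QBinomial.

(** * A finite Jacobi triple product *)

Lemma bin2_mul2 k : ('C(k, 2) * 2 = k * k.-1)%N.
Proof.
elim: k => [|k IHk] //; rewrite binS bin1 mulnDl IHk.
by case: k {IHk} => // k; rewrite !succnK; ring.
Qed.

(* [(n - k)^2] computed in [int]: one of the two truncated differences is [0]. *)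
Definition sqdist (n k : nat) := ((n - k) ^ 2 + (k - n) ^ 2)%N.

Lemma sqdist_exp n k : (0 < n)%N -> (k <= n + n)%N ->
  ('C(k, 2) * 2 + (n + n).-1 * (n + n - k) =
   'C(n, 2) * 2 + (n + n).-1 * n + sqdist n k)%N.
Proof.
move=> n_gt0 le_k2n; rewrite /sqdist !bin2_mul2.
have [le_kn|lt_nk] := leqP k n.
  have [d ->] : exists d, n = (k + d)%N by exists (n - k)%N; lia.
  have -> : (k + d - k = d)%N by lia.
  have -> : (k - (k + d) = 0)%N by lia.
  have -> : (k + d + (k + d) - k = k + d + d)%N by lia.
  rewrite exp0n // addn0.
  case: k n_gt0 {le_kn le_k2n} => [|k] n_gt0; last by rewrite !addSn !succnK; ring.
  by case: d n_gt0 => // d _; rewrite !add0n !addSn !succnK; ring.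
have [e [c [-> ->]]] : exists e c, n = (e.+1 + c)%N /\ k = (e.+1 + c + e.+1)%N.
  by exists (k - n).-1, (n + n - k)%N; lia.
have -> : (e.+1 + c - (e.+1 + c + e.+1) = 0)%N by lia.
have -> : (e.+1 + c + e.+1 - (e.+1 + c) = e.+1)%N by lia.
have -> : (e.+1 + c + (e.+1 + c) - (e.+1 + c + e.+1) = c)%N by lia.
by rewrite exp0n // add0n !addSn !succnK; ring.
Qed.

(* [x (x - 1)] for [x = n - k] in [int]. *)
Definition pronic_dist (n k : nat) := (sqdist n k + k - n)%N.

Section FiniteJacobi.
Variable n : nat.
Hypothesis n_gt0 : (0 < n)%N.
Implicit Type y : {poly int}.

Let x : {poly int} := 'X^((n + n).-1).

Lemma prod_qbinomial_low y :
  \prod_(0 <= j < n) (x + y * 'X^2 ^+ j) =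
  'X^('C(n, 2) * 2) * \prod_(0 <= j < n) (y + 'X^((j * 2).+1)).
Proof.
transitivity (\prod_(0 <= j < n) ('X^(j * 2) * (y + 'X^(((n - j.+1) * 2).+1)))).
  apply: eq_big_nat => j /andP[_ lt_jn]; rewrite /x -exprM.
  have -> : ((n + n).-1 = j * 2 + ((n - j.+1) * 2).+1)%N by lia.
  by rewrite exprD mulnC; ring.
rewrite big_split /= prodrXr -big_distrl /= bin2_sum; congr (_ * _).
by rewrite [RHS]big_nat_rev; apply: eq_big_nat => j _; rewrite add0n.
Qed.

Lemma prod_qbinomial_high y :
  \prod_(0 <= j < n) (x + y * 'X^2 ^+ (j + n)) =
  'X^((n + n).-1 * n) * \prod_(0 <= j < n) (1 + y * 'X^((j * 2).+1)).
Proof.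
transitivity (\prod_(0 <= j < n) ('X^((n + n).-1) * (1 + y * 'X^((j * 2).+1)))).
  apply: eq_big_nat => j _; rewrite /x -exprM.
  have -> : (2 * (j + n) = (n + n).-1 + (j * 2).+1)%N by lia.
  by rewrite exprD; ring.
by rewrite big_split /= prodr_const_nat subn0 -exprM.
Qed.

Theorem jacobi_triple_finite y :
  \prod_(0 <= m < n) ((1 + y * 'X^((m * 2).+1)) * (y + 'X^((m * 2).+1))) =
  \sum_(0 <= k < (n + n).+1) 'X^(sqdist n k) * y ^+ k * qbinom 'X^2 (n + n) k.
Proof.
(* The q-binomial theorem at [Q = q^2] and [x = q^(2n-1)], shifted by [q^s]. *)
pose s := ('C(n, 2) * 2 + (n + n).-1 * n)%N.
apply: (@mulfI _ 'X^s); first by rewrite expf_neq0 // polyX_eq0.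
transitivity (\prod_(0 <= j < n + n) (x + y * 'X^2 ^+ j)).
  rewrite (@big_cat_nat _ _ _ n 0 (n + n)) ?leq_addr //= (big_addn 0 (n + n) n) addnK.
  by rewrite prod_qbinomial_low prod_qbinomial_high big_split /= exprD; ring.
rewrite qbinomial mulr_sumr; apply: eq_big_nat => k /andP[_ le_k2n].
have e_exp : (2 * 'C(k, 2) + (n + n).-1 * (n + n - k) = s + sqdist n k)%N.
  by rewrite mulnC sqdist_exp.
rewrite /x -!exprM !mulrA -exprD -e_exp exprD; ring.
Qed.

Lemma jacobi_triple_finite_X :
  \prod_(0 <= m < n) ((1 + 'X^((m * 2).+2)) * (1 + 'X^(m * 2))) =
  \sum_(0 <= k < (n + n).+1) 'X^(pronic_dist n k) * qbinom 'X^2 (n + n) k :> {poly int}.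
Proof.
apply: (@mulfI _ 'X^n); first by rewrite expf_neq0 // polyX_eq0.
rewrite -{1}(subn0 n) -prodr_const_nat -big_split mulr_sumr /=.
have -> : \prod_(0 <= m < n) ('X * ((1 + 'X^((m * 2).+2)) * (1 + 'X^(m * 2)))) =
          \prod_(0 <= m < n) ((1 + 'X * 'X^((m * 2).+1)) * ('X + 'X^((m * 2).+1))) :> {poly int}.
  by apply: eq_bigr => m _; rewrite !exprS; ring.
rewrite jacobi_triple_finite; apply: eq_bigr => k _.
have le_nk : (n <= sqdist n k + k)%N by rewrite /sqdist; nia.
by rewrite mulrA -!exprD /pronic_dist subnKC.
Qed.

End FiniteJacobi.

(** * Gauss's identities *)

Definition theta_poly (n : nat) : {poly int} := 1 + (\sum_(0 <= j < n) 'X^(j.+1 ^ 2)) *+ 2.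
Definition psi_poly (n : nat) : {poly int} := \sum_(0 <= j < n) 'X^(j * j.+1).

Lemma sum_split_center (f : nat -> {poly int}) n :
  \sum_(0 <= k < (n + n).+1) f k =
  \sum_(0 <= j < n) f (n - j.+1)%N + \sum_(0 <= j < n.+1) f (j + n)%N.
Proof.
rewrite (@big_cat_nat _ _ _ n 0 (n + n).+1) //; last by lia.
rewrite (big_addn 0 _ n) (_ : ((n + n).+1 - n = n.+1)%N); last by lia.
by rewrite big_nat_rev.
Qed.

Lemma sum_sqdist n : \sum_(0 <= k < (n + n).+1) 'X^(sqdist n k) = theta_poly n.
Proof.
rewrite sum_split_center big_nat_recl // /theta_poly mulr2n.
have -> : sqdist n (0 + n) = 0%N by rewrite /sqdist add0n subnn.
have -> : \sum_(0 <= j < n) 'X^(sqdist n (n - j.+1)%N) =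
          \sum_(0 <= j < n) 'X^(j.+1 ^ 2) :> {poly int}.
  apply: eq_big_nat => j /andP[_ lt_jn]; rewrite /sqdist.
  have -> : (n - (n - j.+1) = j.+1)%N by lia.
  have -> : (n - j.+1 - n = 0)%N by lia.
  by rewrite exp0n // addn0.
have -> : \sum_(0 <= j < n) 'X^(sqdist n (j.+1 + n)%N) =
          \sum_(0 <= j < n) 'X^(j.+1 ^ 2) :> {poly int}.
  apply: eq_bigr => j _; rewrite /sqdist addnK.
  have -> : (n - (j.+1 + n) = 0)%N by lia.
  by rewrite exp0n.
by rewrite expr0 addrCA addrA.
Qed.

Lemma sum_pronic_dist n :
  \sum_(0 <= k < (n + n).+1) 'X^(pronic_dist n k) = psi_poly n + psi_poly n.+1.
Proof.
rewrite sum_split_center /psi_poly; congr (_ + _); apply: eq_big_nat => j /andP[_ lt_jn].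
  rewrite /pronic_dist /sqdist.
  have -> : (n - (n - j.+1) = j.+1)%N by lia.
  have -> : (n - j.+1 - n = 0)%N by lia.
  congr 'X^_; rewrite exp0n // addn0; nia.
rewrite /pronic_dist /sqdist addnK.
have -> : (n - (j + n) = 0)%N by lia.
congr 'X^_; rewrite exp0n // add0n; nia.
Qed.

Lemma sqdist_ge n k : ((n - k) + (k - n) <= sqdist n k)%N.
Proof.
rewrite /sqdist; have [le_kn|lt_nk] := leqP k n.
  by rewrite (_ : k - n = 0)%N; [nia | lia].
by rewrite (_ : n - k = 0)%N; [nia | lia].
Qed.

Lemma pronic_dist_ge n k : ((n - k).-1 + (k - n) <= pronic_dist n k)%N.
Proof.
rewrite /pronic_dist /sqdist; have [le_kn|lt_nk] := leqP k n.
  by rewrite (_ : k - n = 0)%N; [nia | lia].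
by rewrite (_ : n - k = 0)%N; [nia | lia].
Qed.

Lemma qpoch_X2 m : qpoch 'X^2 m = eta_poly 2 m.
Proof. by rewrite /qpoch /eta_poly big_mkord; apply: eq_bigr => j _; rewrite -exprM. Qed.

Lemma qbinom_eq_upto N m k : (N <= k)%N -> (N <= m - k)%N -> (k <= m)%N ->
  eq_upto N (fps_of_poly (qbinom 'X^2 m k)) (fk_inv 2).
Proof.
move=> le_Nk le_Nmk le_km; have f2 := fk_mulV 2.
apply: (eq_upto_cancel f2); apply: (eq_upto_cancel f2).
rewrite [fk_inv 2 * _]mulrC f2 mul1r.
have e := qbinom_qpoch ('X^2 : {poly int}) le_km; rewrite !qpoch_X2 in e.
have eta_k := @fk_eq_upto 2 N k isT le_Nk.
have eta_mk := @fk_eq_upto 2 N (m - k) isT le_Nmk.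
rewrite /eq_upto (eq_uptoM (eq_uptoM (erefl _) eta_k) eta_mk) -!rmorphM /= e.
by rewrite -fk_eq_upto // (leq_trans le_Nk le_km).
Qed.

Lemma sum_qbinom_eq_upto N m (e : nat -> nat) :
  (forall k, (k <= m)%N -> (e k <= N)%N -> (N <= k)%N /\ (N <= m - k)%N) ->
  eq_upto N (fps_of_poly (\sum_(0 <= k < m.+1) 'X^(e k) * qbinom 'X^2 m k))
            (fps_of_poly (\sum_(0 <= k < m.+1) 'X^(e k)) * fk_inv 2).
Proof.
move=> small_e; rewrite !rmorph_sum mulr_suml /= big_seq [X in eq_upto _ _ X]big_seq.
apply: eq_upto_sum => k; rewrite mem_index_iota ltnS => le_km.
rewrite rmorphM /=; have [le_eN|lt_Ne] := leqP (e k) N.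
  have [le_Nk le_Nmk] := small_e k le_km le_eN.
  by apply: eq_uptoM => //; apply: qbinom_eq_upto.
exact: etrans (eq_upto_XnM _ lt_Ne) (esym (eq_upto_XnM _ lt_Ne)).
Qed.

Lemma coef_sum_Xn_stable (g : nat -> nat) i m m' : (m <= m')%N ->
  (forall j, (m <= j < m')%N -> (i < g j)%N) ->
  (\sum_(0 <= j < m') 'X^(g j) : {poly int})`_i = (\sum_(0 <= j < m) 'X^(g j) : {poly int})`_i.
Proof.
move=> le_mm' lt_ig; rewrite (@big_cat_nat _ _ _ m 0 m') //= coefD.
rewrite [X in _ + X](_ : _ = 0) ?addr0 // coef_sum big1_seq // => j /andP[_].
by rewrite mem_index_iota coefXn => /lt_ig; case: eqP => // ->; rewrite ltnn.
Qed.

(* Ramanujan's phi(q) = sum_(j in Z) q^(j^2) and psi(q^2) = sum_(j >= 0) q^(j(j+1)). *)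
Definition phi : fps := fun n => (theta_poly n)`_n.

Definition psi2 : fps := fun n => (psi_poly n.+1)`_n.

Lemma phi_eq_upto N m : (N <= m)%N -> eq_upto N phi (fps_of_poly (theta_poly m)).
Proof.
move=> le_Nm; apply/eq_uptoP => i le_iN; rewrite /phi /fps_of_poly /theta_poly !mulr2n !coefD.
rewrite (@coef_sum_Xn_stable _ i i m) //; first exact: leq_trans le_Nm.
move=> j /andP[le_ij _]; have := leq_pmulr j.+1 (ltn0Sn j); rewrite -mulnn; lia.
Qed.

Lemma psi2_eq_upto N m : (N < m)%N -> eq_upto N psi2 (fps_of_poly (psi_poly m)).
Proof.
move=> lt_Nm; apply/eq_uptoP => i le_iN; rewrite /psi2 /fps_of_poly /psi_poly.
rewrite (@coef_sum_Xn_stable _ i i.+1 m) //; first exact: leq_ltn_trans lt_Nm.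
move=> j /andP[lt_ij _]; have := leq_pmull j.+1 (leq_ltn_trans (leq0n i) lt_ij); lia.
Qed.

Lemma big_nat_double (R : Type) (idx : R) (op : Monoid.law idx) (f : nat -> R) n :
  \big[op/idx]_(0 <= j < n + n) f j =
  \big[op/idx]_(0 <= m < n) op (f (m * 2)%N) (f (m * 2).+1).
Proof.
elim: n => [|n IHn]; first by rewrite !big_geq.
rewrite addnS addSn !big_nat_recr //= IHn -Monoid.mulmA.
by rewrite (_ : (n * 2 = n + n)%N) // muln2 addnn.
Qed.

Definition odd_plus_poly n : {poly int} := \prod_(0 <= m < n) (1 + 'X^((m * 2).+1)).
Definition even_plus_poly n : {poly int} := \prod_(0 <= m < n) (1 + 'X^((m * 2).+2)).

Lemma odd_plus_poly_eta n :
  odd_plus_poly n * eta_poly 1 (n + n) * eta_poly 4 n = eta_poly 2 (n + n) * eta_poly 2 n.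
Proof.
rewrite /odd_plus_poly /eta_poly !big_nat_double -!big_split /=; apply: eq_bigr => m _.
have -> : (2 * (m * 2).+1 = (m * 2).+1 + (m * 2).+1)%N by lia.
have -> : (4 * m.+1 = 2 * (m * 2).+2)%N by lia.
have -> : (2 * m.+1 = (m * 2).+2)%N by lia.
by rewrite !mul1n exprD; ring.
Qed.

Lemma even_plus_poly_eta n : even_plus_poly n * eta_poly 2 n = eta_poly 4 n.
Proof.
rewrite /even_plus_poly /eta_poly -big_split /=; apply: eq_bigr => m _.
have -> : (4 * m.+1 = (m * 2).+2 + (m * 2).+2)%N by lia.
have -> : (2 * m.+1 = (m * 2).+2)%N by lia.
by rewrite exprD; ring.
Qed.

Lemma odd_plus_eq_upto N n : (N <= n)%N ->
  eq_upto N (fps_of_poly (odd_plus_poly n)) (fk 2 ^+ 2 * fk_inv 1 * fk_inv 4).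
Proof.
move=> le_Nn; have f1 := fk_mulV 1; have f4 := fk_mulV 4.
apply: (eq_upto_cancel f1); apply: (eq_upto_cancel f4).
have -> : fk 2 ^+ 2 * fk_inv 1 * fk_inv 4 * fk 1 * fk 4 =
          fk 2 * fk 2 * (fk 1 * fk_inv 1) * (fk 4 * fk_inv 4) by ring.
rewrite f1 f4 !mulr1.
have le_N2n : (N <= n + n)%N by lia.
rewrite /eq_upto (eq_uptoM (eq_uptoM (erefl _) (fk_eq_upto _ le_N2n)) (fk_eq_upto _ le_Nn)) //.
rewrite -!rmorphM /= odd_plus_poly_eta rmorphM /=.
by rewrite -(eq_uptoM (fk_eq_upto _ le_N2n) (fk_eq_upto _ le_Nn)).
Qed.

Lemma even_plus_eq_upto N n : (N <= n)%N ->
  eq_upto N (fps_of_poly (even_plus_poly n)) (fk 4 * fk_inv 2).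
Proof.
move=> le_Nn; apply: (eq_upto_cancel (fk_mulV 2)); rewrite mulr_fk_invK /eq_upto.
by rewrite (eq_uptoM (erefl _) (fk_eq_upto _ le_Nn)) // -rmorphM even_plus_poly_eta -fk_eq_upto.
Qed.

Lemma odd_plus_poly_sqr n : (0 < n)%N ->
  odd_plus_poly n ^+ 2 = \sum_(0 <= k < (n + n).+1) 'X^(sqdist n k) * qbinom 'X^2 (n + n) k.
Proof.
move=> n_gt0; have := jacobi_triple_finite n_gt0 1.
under eq_bigr do rewrite mul1r.
under [in RHS]eq_bigr do rewrite expr1n mulr1.
by rewrite /odd_plus_poly expr2 big_split.
Qed.

Lemma even_plus_poly_pair n :
  \prod_(0 <= m < n.+1) ((1 + 'X^((m * 2).+2)) * (1 + 'X^(m * 2))) =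
  2%:R * even_plus_poly n.+1 * even_plus_poly n :> {poly int}.
Proof.
rewrite big_split /= [X in _ * X]big_nat_recl // mul0n expr0.
by rewrite /even_plus_poly; ring.
Qed.

Lemma fps_double_inj F G : F *+ 2 = G *+ 2 -> F = G.
Proof.
move=> e2FG; apply: fps_ext => i; have := congr1 (fun H : fps => H i) e2FG.
by rewrite !mulr2n !fps_addE; lia.
Qed.

Lemma phi_eta : phi = fk 2 ^+ 5 * fk_inv 1 ^+ 2 * fk_inv 4 ^+ 2.
Proof.
have sqr N : eq_upto N ((fk 2 ^+ 2 * fk_inv 1 * fk_inv 4) ^+ 2) (phi * fk_inv 2).
  (* For n = 2N+1, a term of exponent at most N has k >= N and 2n - k >= N. *)
  have le_Nn : (N <= (N + N).+1)%N by lia.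
  rewrite /eq_upto -(eq_uptoX 2 (odd_plus_eq_upto le_Nn)) -rmorphXn /= odd_plus_poly_sqr //.
  rewrite (@sum_qbinom_eq_upto _ _ (sqdist (N + N).+1)) ?sum_sqdist => [|k le_k2n small_k].
    by rewrite -(eq_uptoM (phi_eq_upto le_Nn) (erefl _)).
  by have := sqdist_ge (N + N).+1 k; lia.
by rewrite -(mulr_fk_invK 2 phi) -(fps_eq_upto sqr); ring.
Qed.

Lemma psi2_eta : psi2 = fk 4 ^+ 2 * fk_inv 2.
Proof.
have dbl N :
    eq_upto N (psi2 *+ 2 * fk_inv 2) (2%:R * (fk 4 * fk_inv 2) * (fk 4 * fk_inv 2)).
  have lt_Nn : (N < (N + N).+2)%N by lia.
  have psi2_sum := eq_uptoD (psi2_eq_upto lt_Nn) (psi2_eq_upto (leqW lt_Nn)).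
  rewrite /eq_upto mulr2n (eq_uptoM psi2_sum (erefl _)) -rmorphD -sum_pronic_dist.
  rewrite -(@sum_qbinom_eq_upto _ _ (pronic_dist (N + N).+2)) => [|k _ small_k]; last first.
    by have := pronic_dist_ge (N + N).+2 k; lia.
  rewrite -jacobi_triple_finite_X // even_plus_poly_pair !rmorphM /= rmorph_nat.
  by rewrite (eq_uptoM (eq_uptoM (erefl _) (even_plus_eq_upto _)) (even_plus_eq_upto _)) //; lia.
apply: fps_double_inj; rewrite -(mulr_fk_invK 2 (psi2 *+ 2)) (fps_eq_upto dbl).
by rewrite -(mulr_fk_invK 2 (_ *+ 2)); ring.
Qed.

(** * The 2-dissection *)

Lemma theta_poly_double n :
  theta_poly (n + n) = theta_poly n \Po 'X^4 + 2%:R * 'X * (psi_poly n \Po 'X^4).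
Proof.
have X4 a : 'X^a \Po 'X^4 = 'X^(4 * a) :> {poly int} by rewrite comp_Xn_poly -exprM.
rewrite /theta_poly /psi_poly big_nat_double big_split /= mulrnDl.
rewrite rmorphD rmorph1 rmorphMn !rmorph_sum /= mulr_sumr -sumrMnl.
have -> : \sum_(0 <= m < n) 'X^((m * 2).+2 ^ 2) =
          \sum_(0 <= j < n) ('X^(j.+1 ^ 2) \Po 'X^4) :> {poly int}.
  by apply: eq_bigr => m _; rewrite X4; congr 'X^_; lia.
have -> : \sum_(0 <= m < n) 'X^((m * 2).+1 ^ 2) *+ 2 =
          \sum_(0 <= j < n) (2%:R * 'X * ('X^(j * j.+1) \Po 'X^4)) :> {poly int}.
  apply: eq_bigr => m _; rewrite X4 -mulr_natl -mulrA -exprS; congr (_ * 'X^_); nia.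
ring.
Qed.

Lemma phi_dissect : phi = dilate 4 phi + 2%:R * fps_X * dilate 4 psi2.
Proof.
apply: fps_eq_upto => N; have le_N2N : (N <= N.+1 + N.+1)%N by lia.
have phi4 := eq_upto_dilate 4 (phi_eq_upto (leqnSn N)).
have psi4 := eq_upto_dilate 4 (psi2_eq_upto (ltnSn N)).
rewrite /eq_upto (phi_eq_upto le_N2N) theta_poly_double rmorphD !rmorphM /= rmorph_nat.
by rewrite -!dilate_poly // -(eq_uptoD phi4 (eq_uptoM (erefl _) psi4)).
Qed.

Lemma fk1_inv_sqr_dissect :
  fk_inv 1 ^+ 2 = fk 8 ^+ 5 * fk_inv 2 ^+ 5 * fk_inv 16 ^+ 2 +
                  2%:R * fps_X * fk 4 ^+ 2 * fk 16 ^+ 2 * fk_inv 2 ^+ 5 * fk_inv 8.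
Proof.
have := phi_dissect; rewrite phi_eta psi2_eta !(rmorphXn, rmorphM) /=.
rewrite !dilate_fk // !dilate_fk_inv // -[(4 * 1)%N]/4%N -[(4 * 2)%N]/8%N -[(4 * 4)%N]/16%N.
move=> phi_dilate.
transitivity (fk_inv 1 ^+ 2 * (fk 2 * fk_inv 2) ^+ 5 * (fk 4 * fk_inv 4) ^+ 2).
  by rewrite !fk_mulV !expr1n !mulr1.
transitivity ((fk 2 ^+ 5 * fk_inv 1 ^+ 2 * fk_inv 4 ^+ 2) * fk_inv 2 ^+ 5 * fk 4 ^+ 2).
  by ring.
rewrite phi_dilate.
transitivity (fk 8 ^+ 5 * fk_inv 2 ^+ 5 * fk_inv 16 ^+ 2 * (fk 4 * fk_inv 4) ^+ 2 +
              2%:R * fps_X * fk 4 ^+ 2 * fk 16 ^+ 2 * fk_inv 2 ^+ 5 * fk_inv 8); first by ring.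
by rewrite fk_mulV expr1n mulr1.
Qed.

Lemma abar_dissect c :
  abar c.+1 =
  dilate 2 (fk 2 ^+ c * fk 4 ^+ 5 * fk_inv 1 ^+ (2 * c.+1 + 2) * fk_inv 8 ^+ 2) +
  fps_X * dilate 2 (2%:R * fk 8 ^+ 2 * fk_inv 4 * (fk 2 * fk_inv 1 ^+ 2) ^+ c.+2).
Proof.
rewrite /abar !fps_mulE fps_expE fps_zpowN -PoszM.
set Z := fps_zpow _ _.
rewrite !(rmorphXn, rmorphM) /= rmorph_nat !dilate_fk // !dilate_fk_inv //.
rewrite -[(2 * 1)%N]/2%N -[(2 * 2)%N]/4%N -[(2 * 4)%N]/8%N fk1_inv_sqr_dissect.
transitivity (fk 4 ^+ c * (Z * fk_inv 2 ^+ 3) * fk_inv 2 ^+ 2 *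
  (fk 8 ^+ 5 * fk_inv 16 ^+ 2 + 2%:R * fps_X * fk 4 ^+ 2 * fk 16 ^+ 2 * fk_inv 8)).
  by ring.
rewrite fps_zpowB ?fk0 // -[(2 * 8)%N]/16%N -[c.+2]addn2 mulnS !exprD !exprMn.
ring.
Qed.

Theorem lemma5p2 (c : nat) (hc : (1 <= c)%N) :
  (forall n : nat,
     abar c (2 * n)%N =
     fps_mul (fps_exp (fk 2) c.-1)
       (fps_mul (fps_exp (fk 4) 5)
          (fps_mul (fps_zpow (fk 1) (- (2%:Z * c%:Z + 2%:Z)))
                   (fps_zpow (fk 8) (-2)))) n)
  /\
  (forall n : nat,
     abar c (2 * n).+1 =
     fps_scale 2
       (fps_mul (fps_exp (fk 8) 2)
          (fps_mul (fps_zpow (fk 4) (-1))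
             (fps_exp (fps_mul (fk 2) (fps_zpow (fk 1) (-2))) c.+1))) n).
Proof.
case: c hc => // c _.
set E := fps_mul _ _; set O := fps_scale _ _.
suff -> : abar c.+1 = dilate 2 E + fps_X * dilate 2 O.
  by split=> n; have [even odd] := coef_dissect2 E O n.
rewrite abar_dissect /E /O !fps_mulE !fps_expE fps_scale_nat -PoszM -PoszD !fps_zpowN.
by congr (dilate 2 _ + fps_X * dilate 2 _); ring.
Qed.
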